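(* Let $\Lambda$ be a finite-dimensional algebra over an algebraically closed field $k$ and let $M_1,M_2$ be non-isomorphic finitely generated $\Lambda$-modules that are bricks, i.e. $\mathrm{End}_\Lambda(M_i)\simeq k$ for $i=1,2$. Then $\mathrm{End}_\Lambda(M_1\oplus M_2)$ is symmetric if and only if $\mathrm{Hom}_\Lambda(M_1,M_2)=\mathrm{Hom}_\Lambda(M_2,M_1)=0$.
   Context: Symmetric: the algebra is isomorphic to its $k$-dual as a bimodule. *)

From HB Require Import structures.
From mathcomp Require Import all_boot all_algebra all_field.
Set Implicit Arguments. Unset Strict Implicit. Unset Printing Implicit Defensive.
Import GRing.Theory.
Local Open Scope ring_scope.

(* A finitely generated (= finite-dimensional) left Lambda-module of
   K-dimension m is given by a representation rho : A -> 'M[K]_m acting on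
   column vectors:  a . v = rho a *m v. *)

Section Defs.
Variables (K : fieldType) (A : falgType K).

Definition is_rep (m : nat) (rho : A -> 'M[K]_m) : Prop :=
  [/\ forall (c : K) (a b : A), rho (c *: a + b) = c *: rho a + rho b,
      rho 1 = 1%:M &
      forall a b : A, rho (a * b) = rho a *m rho b].

Definition is_hom (m1 m2 : nat) (rho1 : A -> 'M[K]_m1) (rho2 : A -> 'M[K]_m2)
  (f : 'M[K]_(m2, m1)) : Prop :=
  forall a : A, f *m rho1 a = rho2 a *m f.

Definition mod_iso (m1 m2 : nat) (rho1 : A -> 'M[K]_m1) (rho2 : A -> 'M[K]_m2)
  : Prop :=
  exists (f : 'M[K]_(m2, m1)) (g : 'M[K]_(m1, m2)),
    [/\ is_hom rho1 rho2 f, is_hom rho2 rho1 g, f *m g = 1%:M & g *m f = 1%:M].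

Definition brick (m : nat) (rho : A -> 'M[K]_m) : Prop :=
  (0 < m)%N /\ forall f : 'M[K]_m, is_hom rho rho f -> exists c : K, f = c%:M.

Definition dsum_rep (m1 m2 : nat) (rho1 : A -> 'M[K]_m1) (rho2 : A -> 'M[K]_m2)
  : A -> 'M[K]_(m1 + m2) :=
  fun a => block_mx (rho1 a) 0 0 (rho2 a).

End Defs.

(* A K-algebra E, given as a subalgebra (predicate) of 'M[K]_n, is symmetric:
   E is isomorphic to its K-dual D(E) = Hom_K(E, K) as an E-E-bimodule, where
   (a . f . b)(y) = f (b y a).  The isomorphism is x |-> phi x. *)
Definition symmetric_alg (K : fieldType) (n : nat) (E : 'M[K]_n -> Prop) : Prop :=
  exists phi : 'M[K]_n -> 'M[K]_n -> K,
  [/\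
      (forall x, E x -> forall (c : K) y z, E y -> E z ->
          phi x (c *: y + z) = c * phi x y + phi x z),
      (forall (c : K) x y, E x -> E y -> forall z, E z ->
          phi (c *: x + y) z = c * phi x z + phi y z),
      (forall a x b y, E a -> E x -> E b -> E y ->
          phi (a *m x *m b) y = phi x (b *m y *m a)),
      (forall x, E x -> (forall y, E y -> phi x y = 0) -> x = 0) &
      (forall f : 'M[K]_n -> K,
          (forall (c : K) y z, E y -> E z -> f (c *: y + z) = c * f y + f z) ->
          exists2 x, E x & forall y, E y -> phi x y = f y)].

(* Since M1 and M2 are non-isomorphic bricks, any composite M1 -> M2 -> M1 is
   a scalar that must vanish (otherwise the two maps would be inverse
   isomorphisms up to scaling).  If moreover Hom(M1,M2) = Hom(M2,M1) = 0, then
   End(M1 (+) M2) = k x k, which is symmetric.  Conversely, a symmetric algebra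
   E carries a nondegenerate form lam with lam(xy) = lam(yx); for f : M1 -> M2
   viewed in E, lam(f y) = lam(e2 f y) = lam(f y e2) = 0 for all y in E, since
   f y e2 only involves composites M2 -> M1 -> M2.  Hence f = 0, and likewise
   for maps M2 -> M1. *)

From HB Require Import structures.
From mathcomp Require Import all_boot all_algebra all_field.
From mathcomp Require Import ring.
Set Implicit Arguments. Unset Strict Implicit. Unset Printing Implicit Defensive.
Import GRing.Theory.
Local Open Scope ring_scope.

Definition symmetrizing_form (K : fieldType) (n : nat)
  (E : 'M[K]_n -> Prop) (lam : 'M[K]_n -> K) : Prop :=
  [/\ forall (c : K) y z, E y -> E z -> lam (c *: y + z) = c * lam y + lam z,
      forall x y, E x -> E y -> lam (x *m y) = lam (y *m x) &
      forall x, E x -> (forall y, E y -> lam (x *m y) = 0) -> x = 0].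

Section SymmetrizingForm.
Variables (K : fieldType) (n : nat) (E : 'M[K]_n -> Prop).
Hypotheses (E0 : E 0) (E1 : E 1%:M)
           (EM : forall x y, E x -> E y -> E (x *m y)).

Lemma symmetric_alg_form : symmetric_alg E -> exists lam, symmetrizing_form E lam.
Proof.
move=> [phi [phi_lin _ phi_bimod phi_inj _]].
have phiE x y : E x -> E y -> phi x y = phi 1%:M (x *m y).
  by move=> Ex Ey; have := phi_bimod _ _ _ _ E1 E1 Ex Ey; rewrite !mul1mx mulmx1.
exists (phi 1%:M); split.
- exact: phi_lin.
- move=> x y Ex Ey; rewrite -phiE //.
  by have := phi_bimod _ _ _ _ Ex E1 E1 Ey; rewrite !mul1mx !mulmx1.
- by move=> x Ex lam_x0; apply: phi_inj => // y Ey; rewrite phiE // lam_x0.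
Qed.

Lemma symmetrizing_form_corner_eq0 lam e x :
  symmetrizing_form E lam -> E e -> E x -> e *m x = x ->
  (forall y, E y -> x *m y *m e = 0) -> x = 0.
Proof.
move=> [lam_lin lam_sym lam_nd] Ee Ex ex_x xye0.
have lam0 : lam 0 = 0.
  have := lam_lin 1 0 0 E0 E0; rewrite scale1r mul1r addr0 => lam00.
  by apply: (addrI (lam 0)); rewrite addr0 -lam00.
apply: lam_nd => // y Ey.
have Exy := EM Ex Ey.
by rewrite -ex_x -mulmxA lam_sym // (xye0 y Ey).
Qed.

End SymmetrizingForm.

Section Diag2.
Variables (K : fieldType) (m1 m2 : nat).
Hypotheses (m1_gt0 : (0 < m1)%N) (m2_gt0 : (0 < m2)%N).

Definition diag2 (d1 d2 : K) : 'M[K]_(m1 + m2) := block_mx d1%:M 0 0 d2%:M.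

Let i1 : 'I_(m1 + m2) := lshift m2 (Ordinal m1_gt0).
Let i2 : 'I_(m1 + m2) := rshift m1 (Ordinal m2_gt0).

Lemma diag2_i1 d1 d2 : diag2 d1 d2 i1 i1 = d1.
Proof. by rewrite /diag2 block_mxEul mxE eqxx mulr1n. Qed.

Lemma diag2_i2 d1 d2 : diag2 d1 d2 i2 i2 = d2.
Proof. by rewrite /diag2 block_mxEdr mxE eqxx mulr1n. Qed.

Lemma diag2M a1 a2 b1 b2 : diag2 a1 a2 *m diag2 b1 b2 = diag2 (a1 * b1) (a2 * b2).
Proof.
by rewrite /diag2 mulmx_block !(mulmx0, mul0mx, addr0, add0r) -!scalar_mxM.
Qed.

Lemma diag2_lin c a1 a2 b1 b2 :
  diag2 (c * a1 + b1) (c * a2 + b2) = c *: diag2 a1 a2 + diag2 b1 b2.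
Proof.
rewrite /diag2 scale_block_mx add_block_mx !scale_scalar_mx.
by rewrite !raddfD /= !scaler0 !addr0.
Qed.

Lemma diag2_00 : diag2 0 0 = 0.
Proof. by rewrite /diag2 !raddf0 block_mx0. Qed.

Lemma symmetric_alg_diag2 (E : 'M[K]_(m1 + m2) -> Prop) :
  (forall y, E y <-> exists d1 d2, y = diag2 d1 d2) -> symmetric_alg E.
Proof.
move=> E_diag2.
have diag2E d1 d2 : E (diag2 d1 d2) by apply/E_diag2; exists d1, d2.
exists (fun x y => x i1 i1 * y i1 i1 + x i2 i2 * y i2 i2); split.
- by move=> x _ c y z _ _; rewrite !mxE; ring.
- by move=> c x y _ _ z _; rewrite !mxE; ring.
- move=> a x b y /E_diag2[a1 [a2 ->]] /E_diag2[x1 [x2 ->]].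
  move=> /E_diag2[b1 [b2 ->]] /E_diag2[y1 [y2 ->]].
  by rewrite !diag2M !diag2_i1 !diag2_i2; ring.
- move=> x /E_diag2[c1 [c2 ->]] orth.
  have := orth _ (diag2E 1 0); have := orth _ (diag2E 0 1).
  rewrite !diag2_i1 !diag2_i2 !mulr0 !mulr1 addr0 add0r => -> ->.
  exact: diag2_00.
move=> f f_lin.
have f_diag2 c a1 a2 b1 b2 :
    f (diag2 (c * a1 + b1) (c * a2 + b2)) = c * f (diag2 a1 a2) + f (diag2 b1 b2).
  by rewrite diag2_lin f_lin.
have f00 : f (diag2 0 0) = 0.
  have := f_diag2 1 0 0 0 0; rewrite !mul1r !addr0 => f00E.
  by apply: (addrI (f (diag2 0 0))); rewrite addr0 -f00E.
exists (diag2 (f (diag2 1 0)) (f (diag2 0 1))) => // y /E_diag2[d1 [d2 ->]].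
have := f_diag2 d1 1 0 0 d2; have := f_diag2 d2 0 1 0 0.
rewrite !(mulr1, mulr0, addr0, add0r) f00 addr0 => -> ->.
by rewrite !diag2_i1 !diag2_i2 mulrC [_ * d2]mulrC.
Qed.

End Diag2.

Arguments diag2 {K m1 m2}.

Section Homs.
Variables (K : fieldType) (A : falgType K).

Lemma is_hom_mul m1 m2 m3 (rho1 : A -> 'M[K]_m1) (rho2 : A -> 'M[K]_m2)
  (rho3 : A -> 'M[K]_m3) (f : 'M[K]_(m3, m2)) (g : 'M[K]_(m2, m1)) :
  is_hom rho2 rho3 f -> is_hom rho1 rho2 g -> is_hom rho1 rho3 (f *m g).
Proof. by move=> hf hg a; rewrite -mulmxA hg mulmxA hf mulmxA. Qed.

Lemma is_homZ m1 m2 (rho1 : A -> 'M[K]_m1) (rho2 : A -> 'M[K]_m2) c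
  (f : 'M[K]_(m2, m1)) : is_hom rho1 rho2 f -> is_hom rho1 rho2 (c *: f).
Proof. by move=> hf a; rewrite -scalemxAl hf scalemxAr. Qed.

Lemma is_hom0 m1 m2 (rho1 : A -> 'M[K]_m1) (rho2 : A -> 'M[K]_m2) :
  is_hom rho1 rho2 0.
Proof. by move=> a; rewrite mul0mx mulmx0. Qed.

Lemma is_hom_scalar m (rho : A -> 'M[K]_m) c : is_hom rho rho c%:M.
Proof. by move=> a; rewrite mul_scalar_mx mul_mx_scalar. Qed.

Lemma brick_hom_mulmx_eq0 m1 m2 (rho1 : A -> 'M[K]_m1) (rho2 : A -> 'M[K]_m2)
  (f : 'M[K]_(m2, m1)) (g : 'M[K]_(m1, m2)) :
  brick rho1 -> brick rho2 -> ~ mod_iso rho1 rho2 ->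
  is_hom rho1 rho2 f -> is_hom rho2 rho1 g -> f *m g = 0 /\ g *m f = 0.
Proof.
move=> [_ br1] [_ br2] niso hf hg.
have [->|f_neq0] := eqVneq f 0; first by rewrite mul0mx mulmx0.
have [c fgE] := br2 _ (is_hom_mul hf hg).
have [a gfE] := br1 _ (is_hom_mul hg hf).
have {a}gfE : g *m f = c%:M.
  suff -> : c = a by [].
  have : c *: f = a *: f by rewrite -mul_scalar_mx -fgE -mulmxA gfE mul_mx_scalar.
  by move/eqP; rewrite -subr_eq0 -scalerBl scaler_eq0 (negPf f_neq0) orbF subr_eq0 => /eqP.
have [c0|c_neq0] := eqVneq c 0; first by rewrite fgE gfE c0 !raddf0.
exfalso; apply: niso; exists f, (c^-1 *: g); split => //.
- exact: is_homZ.
- by rewrite -scalemxAr fgE scale_scalar_mx mulVf.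
- by rewrite -scalemxAl gfE scale_scalar_mx mulVf.
Qed.

End Homs.

Section DirectSum.
Variables (K : fieldType) (A : falgType K) (m1 m2 : nat).
Variables (rho1 : A -> 'M[K]_m1) (rho2 : A -> 'M[K]_m2).

Local Notation End_dsum := (is_hom (dsum_rep rho1 rho2) (dsum_rep rho1 rho2)).

Lemma is_hom_dsumE a b c d :
  End_dsum (block_mx a b c d) <->
  [/\ is_hom rho1 rho1 a, is_hom rho2 rho1 b, is_hom rho1 rho2 c & is_hom rho2 rho2 d].
Proof.
rewrite /is_hom /dsum_rep; split.
  move=> hom; split=> t; have := hom t;
  by rewrite !mulmx_block !(mulmx0, mul0mx, addr0, add0r) => /eq_block_mx[].
by case=> ha hb hc hd t; rewrite !mulmx_block !(mulmx0, mul0mx, addr0, add0r) ha hb hc hd.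
Qed.

Lemma End_dsum0 : End_dsum 0.
Proof. exact: is_hom0. Qed.

Lemma End_dsum1 : End_dsum 1%:M.
Proof. exact: is_hom_scalar. Qed.

Lemma End_dsumM x y : End_dsum x -> End_dsum y -> End_dsum (x *m y).
Proof. exact: is_hom_mul. Qed.

Hypotheses (br1 : brick rho1) (br2 : brick rho2) (niso : ~ mod_iso rho1 rho2).

Lemma symmetric_End_dsum_hom_eq0 :
  symmetric_alg End_dsum ->
  (forall f : 'M[K]_(m2, m1), is_hom rho1 rho2 f -> f = 0) /\
  (forall g : 'M[K]_(m1, m2), is_hom rho2 rho1 g -> g = 0).
Proof.
case/(symmetric_alg_form End_dsum1) => lam lam_form.
have corner_eq0 e x :=
  symmetrizing_form_corner_eq0 End_dsum0 End_dsumM (e := e) (x := x) lam_form.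
have blocks y : End_dsum y -> exists a b c d,
    [/\ y = block_mx a b c d, is_hom rho2 rho1 b & is_hom rho1 rho2 c].
  rewrite -(submxK y) => /is_hom_dsumE[_ hb hc _].
  by exists (ulsubmx y), (ursubmx y), (dlsubmx y), (drsubmx y).
split=> [f hf | g hg].
- suff /(congr1 dlsubmx) : block_mx 0 0 f 0 = 0 :> 'M[K]_(m1 + m2).
    by rewrite block_mxKdl -block_mx0 block_mxKdl.
  apply: (corner_eq0 (block_mx 0 0 0 1%:M)).
  + by apply/is_hom_dsumE; split; exact: is_hom0 || exact: is_hom_scalar.
  + by apply/is_hom_dsumE; split; exact: is_hom0 || exact: hf.
  + by rewrite mulmx_block !(mulmx0, mul0mx, addr0, add0r) mul1mx.
  move=> y /blocks[a [b [c [d [-> hb _]]]]].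
  have [fb0 _] := brick_hom_mulmx_eq0 br1 br2 niso hf hb.
  by rewrite !mulmx_block !(mulmx0, mul0mx, addr0, add0r) mulmx1 fb0 block_mx0.
- suff /(congr1 ursubmx) : block_mx 0 g 0 0 = 0 :> 'M[K]_(m1 + m2).
    by rewrite block_mxKur -block_mx0 block_mxKur.
  apply: (corner_eq0 (block_mx 1%:M 0 0 0)).
  + by apply/is_hom_dsumE; split; exact: is_hom0 || exact: is_hom_scalar.
  + by apply/is_hom_dsumE; split; exact: is_hom0 || exact: hg.
  + by rewrite mulmx_block !(mulmx0, mul0mx, addr0, add0r) mul1mx.
  move=> y /blocks[a [b [c [d [-> _ hc]]]]].
  have [_ gc0] := brick_hom_mulmx_eq0 br1 br2 niso hc hg.
  by rewrite !mulmx_block !(mulmx0, mul0mx, addr0, add0r) mulmx1 gc0 block_mx0.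
Qed.

Lemma End_dsum_diag2 :
  (forall f : 'M[K]_(m2, m1), is_hom rho1 rho2 f -> f = 0) ->
  (forall g : 'M[K]_(m1, m2), is_hom rho2 rho1 g -> g = 0) ->
  forall y, End_dsum y <-> exists d1 d2, y = diag2 d1 d2.
Proof.
move=> hom12_eq0 hom21_eq0 y; split.
  rewrite -(submxK y) => /is_hom_dsumE[ha hb hc hd].
  have [d1 ->] := br1.2 _ ha; have [d2 ->] := br2.2 _ hd.
  by exists d1, d2; rewrite (hom12_eq0 _ hc) (hom21_eq0 _ hb).
by move=> [d1 [d2 ->]]; apply/is_hom_dsumE; split; exact: is_hom_scalar || exact: is_hom0.
Qed.

End DirectSum.

Theorem corollary5p5 (K : closedFieldType) (A : falgType K) (m1 m2 : nat)
  (rho1 : A -> 'M[K]_m1) (rho2 : A -> 'M[K]_m2) :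
  is_rep rho1 -> is_rep rho2 -> brick rho1 -> brick rho2 ->
  ~ mod_iso rho1 rho2 ->
  (symmetric_alg (fun f : 'M[K]_(m1 + m2) =>
                    is_hom (dsum_rep rho1 rho2) (dsum_rep rho1 rho2) f)
   <-> (forall f : 'M[K]_(m2, m1), is_hom rho1 rho2 f -> f = 0) /\
       (forall g : 'M[K]_(m1, m2), is_hom rho2 rho1 g -> g = 0)).
Proof.
move=> _ _ br1 br2 niso; split; first exact: symmetric_End_dsum_hom_eq0.
case=> hom12_eq0 hom21_eq0.
apply: (symmetric_alg_diag2 br1.1 br2.1).
exact: End_dsum_diag2.
Qed.
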